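(* A pomset language $\mathcal U\subseteq\mathsf{Pom}^{\mathsf{sp}}$ is accepted by some finite pomset automaton (i.e., $\mathcal U=L_A(q)$ for some finite PA $A$ and state $q$ of $A$) if and only if $\mathcal U$ is context-free.
   Context: Fix a finite alphabet $\Sigma$. Pomsets are isomorphism classes of $\Sigma$-labelled posets; $1$ is the empty pomset, $a\in\Sigma$ the one-point pomset. $U\cdot V$ is the disjoint union with every element of $U$ below every element of $V$; $U\parallel V$ the disjoint union with no added order. $\mathsf{Pom}^{\mathsf{sp}}$ is the smallest set containing $1$ and all $a$ closed under $\cdot,\parallel$. A PA is $A=\langle Q,\delta,\gamma,F\rangle$ with $F\subseteq Q$, $\delta:Q\times\Sigma\to Q$, $\gamma:Q^3\to Q$, containing states $\bot\notin F$, $\top\in F$ with $\delta(\bot,a)=\delta(\top,a)=\bot$ and $\gamma(\bot,r,s)=\gamma(\top,r,s)=\bot$; it is finite if $Q$ is finite. Traces $\to_A\subseteq Q\times\mathsf{Pom}^{\mathsf{sp}}\times Q$: smallest relation with $q\xrightarrow{1}_A q$; $q\xrightarrow{a}_A\delta(q,a)$; $q\xrightarrow{U}_A q''\xrightarrow{V}_A q'$ implies $q\xrightarrow{U\cdot V}_A q'$; $r\xrightarrow{U}_A r'\in F$, $s\xrightarrow{V}_A s'\in F$ imply $q\xrightarrow{U\parallel V}_A\gamma(q,r,s)$. $L_A(q)=\{U:\exists q'\in F.\ q\xrightarrow{U}_A q'\}$. A context-free pomset grammar is a triple $G=\langle\Gamma,S,R\rangle$ with $\Gamma$ a finite set of non-terminals,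 $S\in\Gamma$ the start symbol, and $R$ a finite set of production rules, each a pair of a non-terminal and a term built from symbols in $\Gamma\cup\Sigma\cup\{\epsilon\}$ using binary sequential products $\cdot$ and parallel products $\parallel$. Derivations rewrite occurrences of non-terminals by right-hand sides of rules as usual, starting from $S$; a derived term containing no non-terminals denotes a series-parallel pomset (interpreting $\epsilon$ as $1$, $a$ as the primitive pomset, and $\cdot,\parallel$ as pomset compositions). $[\![G]\!]$ is the set of pomsets so derived, and a pomset language is context-free if it equals $[\![G]\!]$ for some such $G$. *)

From Stdlib Require List.
From mathcomp Require Import all_boot.
Set Implicit Arguments. Unset Strict Implicit. Unset Printing Implicit Defensive.

Section Pomsets.
Variable Sigma : Type.

(** Finite labelled relational structures; a pomset is the isomorphism class
    of a labelled poset.  Pomset languages are represented as predicates on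
    representatives that are closed under isomorphism. *)
Record lpo := Lpo { lsize : nat; llab : 'I_lsize -> Sigma; lord : rel 'I_lsize }.

Definition lpo_iso (P Q : lpo) : Prop :=
  exists f : 'I_(lsize P) -> 'I_(lsize Q),
    bijective f /\ (forall x, @llab Q (f x) = @llab P x)
    /\ (forall x y, @lord Q (f x) (f y) = @lord P x y).

Definition is_pomset (P : lpo) : Prop :=
  reflexive (@lord P) /\ antisymmetric (@lord P) /\ transitive (@lord P).

Definition empty_lab (i : 'I_0) : Sigma. Proof. by case: i. Defined.

Definition pom_one : lpo := @Lpo 0 empty_lab (fun _ _ => true).

Definition pom_atom (a : Sigma) : lpo := @Lpo 1 (fun _ => a) (fun _ _ => true).

Definition sum_lab (P Q : lpo) (i : 'I_(lsize P + lsize Q)) : Sigma :=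
  match split i with inl j => @llab P j | inr k => @llab Q k end.

Definition pom_seq (P Q : lpo) : lpo :=
  @Lpo (lsize P + lsize Q) (@sum_lab P Q)
    (fun i j => match split i, split j with
                | inl a, inl b => @lord P a b
                | inr a, inr b => @lord Q a b
                | inl _, inr _ => true
                | inr _, inl _ => false end).

Definition pom_par (P Q : lpo) : lpo :=
  @Lpo (lsize P + lsize Q) (@sum_lab P Q)
    (fun i j => match split i, split j with
                | inl a, inl b => @lord P a b
                | inr a, inr b => @lord Q a b
                | _, _ => false end).

Inductive is_sp : lpo -> Prop :=
| sp_iso P Q : is_sp P -> lpo_iso P Q -> is_sp Q
| sp_one : is_sp pom_one
| sp_atom a : is_sp (pom_atom a)
| sp_seq P Q : is_sp P -> is_sp Q -> is_sp (pom_seq P Q)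
| sp_par P Q : is_sp P -> is_sp Q -> is_sp (pom_par P Q).

End Pomsets.

Record PA (Sigma : Type) (Q : Type) := MkPA {
  pa_delta : Q -> Sigma -> Q;
  pa_gamma : Q -> Q -> Q -> Q;
  pa_F : Q -> Prop;
  pa_bot : Q;
  pa_top : Q;
  pa_bot_notF : ~ pa_F pa_bot;
  pa_top_F : pa_F pa_top;
  pa_delta_bot : forall a, pa_delta pa_bot a = pa_bot;
  pa_delta_top : forall a, pa_delta pa_top a = pa_bot;
  pa_gamma_bot : forall r s, pa_gamma pa_bot r s = pa_bot;
  pa_gamma_top : forall r s, pa_gamma pa_top r s = pa_bot }.

Inductive pa_trace (Sigma Q : Type) (A : PA Sigma Q) : Q -> lpo Sigma -> Q -> Prop :=
| tr_one q P : lpo_iso P (pom_one Sigma) -> pa_trace A q P q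
| tr_atom q a P : lpo_iso P (pom_atom a) -> pa_trace A q P (pa_delta A q a)
| tr_seq q q'' q' U V P : pa_trace A q U q'' -> pa_trace A q'' V q' ->
    lpo_iso P (pom_seq U V) -> pa_trace A q P q'
| tr_par q r r' s s' U V P : pa_trace A r U r' -> pa_F A r' ->
    pa_trace A s V s' -> pa_F A s' ->
    lpo_iso P (pom_par U V) -> pa_trace A q P (pa_gamma A q r s).

Definition pa_lang (Sigma Q : Type) (A : PA Sigma Q) (q : Q) (P : lpo Sigma) : Prop :=
  exists q', pa_F A q' /\ pa_trace A q P q'.

Inductive gterm (Gamma Sigma : Type) :=
| GNT of Gamma
| GLet of Sigma
| GEps
| GSeq of gterm Gamma Sigma & gterm Gamma Sigma
| GPar of gterm Gamma Sigma & gterm Gamma Sigma.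
Arguments GEps {Gamma Sigma}.

Record grammar (Sigma : Type) := MkGrammar {
  g_NT : finType;
  g_start : g_NT;
  g_rules : list (g_NT * gterm g_NT Sigma) }.

Inductive gstep (Gamma Sigma : Type) (R : list (Gamma * gterm Gamma Sigma)) :
  gterm Gamma Sigma -> gterm Gamma Sigma -> Prop :=
| gs_rule X t : List.In (X, t) R -> gstep R (GNT _ X) t
| gs_seql t1 t1' t2 : gstep R t1 t1' -> gstep R (GSeq t1 t2) (GSeq t1' t2)
| gs_seqr t1 t2 t2' : gstep R t2 t2' -> gstep R (GSeq t1 t2) (GSeq t1 t2')
| gs_parl t1 t1' t2 : gstep R t1 t1' -> gstep R (GPar t1 t2) (GPar t1' t2)
| gs_parr t1 t2 t2' : gstep R t2 t2' -> gstep R (GPar t1 t2) (GPar t1 t2').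

Inductive gderiv (Gamma Sigma : Type) (R : list (Gamma * gterm Gamma Sigma)) :
  gterm Gamma Sigma -> gterm Gamma Sigma -> Prop :=
| gd_refl t : gderiv R t t
| gd_step t1 t2 t3 : gstep R t1 t2 -> gderiv R t2 t3 -> gderiv R t1 t3.

Fixpoint gground (Gamma Sigma : Type) (t : gterm Gamma Sigma) : Prop :=
  match t with
  | GNT _ => False
  | GLet _ | GEps => True
  | GSeq t1 t2 | GPar t1 t2 => gground t1 /\ gground t2
  end.

(** denotation of a term (only meaningful on ground terms) *)
Fixpoint gsem (Gamma Sigma : Type) (t : gterm Gamma Sigma) : lpo Sigma :=
  match t with
  | GNT _ => pom_one Sigma
  | GLet a => pom_atom a
  | GEps => pom_one Sigma
  | GSeq t1 t2 => pom_seq (gsem t1) (gsem t2)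
  | GPar t1 t2 => pom_par (gsem t1) (gsem t2)
  end.

Definition glang (Sigma : Type) (G : grammar Sigma) (P : lpo Sigma) : Prop :=
  exists t, gderiv (g_rules G) (GNT _ (g_start G)) t /\ gground t /\
            lpo_iso P (gsem t).

From HB Require Import structures.
From mathcomp Require Import all_boot.
From Stdlib Require Import ClassicalEpsilon.
Set Implicit Arguments. Unset Strict Implicit. Unset Printing Implicit Defensive.

(* From an automaton to a grammar: a non-terminal (q, q') for every pair of states
   generates exactly the pomsets U with q --U--> q'; every clause of the trace relation
   becomes a family of rules, and the start symbol rewrites to (q0, q') for each
   accepting q'.

   From a grammar to an automaton: the states are the subterms of the grammar, plus
   bot and top, and the state of a term t accepts exactly the language of t.  Forks
   suffice to simulate everything: t1 . t2 forks into t1 and the empty branch top and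
   then continues at t2; t1 || t2 forks into t1 and t2 and lands in top; a non-terminal
   X forks into some right-hand side of X and top.  Soundness is the invariant that a
   trace q --U--> q' sends L(q') into L(q) after prefixing by U; completeness is an
   induction on derivations. *)

Lemma InP (T : eqType) (x : T) (s : seq T) : reflect (List.In x s) (x \in s).
Proof.
elim: s => [|y s IH] /=; first by constructor.
by rewrite in_cons; apply: (iffP orP) => [[/eqP->|/IH]|[->|/IH]]; auto.
Qed.

Lemma finite_cover (I : finType) (B : Type) (f : I -> B) (p : B -> Prop) :
  (forall y, p y -> exists i, f i = y) ->
  exists s : seq B, forall y, List.In y s <-> p y.
Proof.
move=> cover; pose dec i := if excluded_middle_informative (p (f i)) then true else false.
exists [seq f i | i <- enum I & dec i] => y; rewrite List.in_map_iff; split.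
  by move=> [i [<- /InP]]; rewrite mem_filter /dec; case: excluded_middle_informative.
move=> py; have [i fi] := cover y py; exists i; split=> //; apply/InP.
by rewrite mem_filter mem_enum andbT /dec fi; case: excluded_middle_informative.
Qed.

Definition ord0_elim T (i : 'I_0) : T := False_rect T (Bool.diff_false_true (ltn_ord i)).

Definition ord_sum_map m n m' n' (f : 'I_m -> 'I_m') (h : 'I_n -> 'I_n')
    (i : 'I_(m + n)) : 'I_(m' + n') :=
  unsplit (match split i with inl a => inl (f a) | inr b => inr (h b) end).

Lemma split_ord_sum_map m n m' n' (f : 'I_m -> 'I_m') (h : 'I_n -> 'I_n') i :
  split (ord_sum_map f h i) =
  match split i with inl a => inl (f a) | inr b => inr (h b) end.
Proof. exact: unsplitK. Qed.

Lemma ord_sum_mapK m n m' n' (f : 'I_m -> 'I_m') (g : 'I_m' -> 'I_m)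
    (h : 'I_n -> 'I_n') (k : 'I_n' -> 'I_n) :
  cancel f g -> cancel h k -> cancel (ord_sum_map f h) (ord_sum_map g k).
Proof.
move=> fK hK i; rewrite {1}/ord_sum_map split_ord_sum_map -[RHS]splitK.
by case: (split i) => a; rewrite ?fK ?hK.
Qed.

Section Isomorphisms.
Variable Sigma : Type.
Implicit Types P Q W : lpo Sigma.

Lemma lpo_iso_refl P : lpo_iso P P.
Proof. by exists id; split; first exact: (Bijective (g := id)). Qed.

Lemma lpo_iso_sym P Q : lpo_iso P Q -> lpo_iso Q P.
Proof.
move=> [f [[g fK gK] [fl fo]]]; exists g; split; first exact: (Bijective gK fK).
by split=> [x|x y]; rewrite -?fl -?fo !gK.
Qed.

Lemma lpo_iso_trans P Q W : lpo_iso P Q -> lpo_iso Q W -> lpo_iso P W.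
Proof.
move=> [f [fb [fl fo]]] [h [hb [hl ho]]]; exists (h \o f); split.
  exact: bij_comp.
by split=> [x|x y]; rewrite /= ?hl ?fl ?ho ?fo.
Qed.

(* [pom_seq] and [pom_par] are [lpo_sum true] and [lpo_sum false] up to conversion. *)
Definition lpo_sum (cross : bool) P Q : lpo Sigma :=
  @Lpo _ (lsize P + lsize Q) (@sum_lab _ P Q)
    (fun i j => match split i, split j with
                | inl a, inl b => lord a b
                | inr a, inr b => lord a b
                | inl _, inr _ => cross
                | inr _, inl _ => false end).

Lemma lpo_sum_iso c P P' Q Q' : lpo_iso P P' -> lpo_iso Q Q' ->
  lpo_iso (lpo_sum c P Q) (lpo_sum c P' Q').
Proof.
move=> [f [[g fK gK] [fl fo]]] [h [[k hK kK] [hl ho]]].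
exists (ord_sum_map f h); split.
  exact: Bijective (ord_sum_mapK fK hK) (ord_sum_mapK gK kK).
split=> [i|i j] /=; rewrite /sum_lab !split_ord_sum_map.
  by case: (split i).
by case: (split i) => a; case: (split j).
Qed.

Lemma lpo_sum1r c P : lpo_iso (lpo_sum c P (pom_one Sigma)) P.
Proof.
exists (fun i => match split i with inl a => a | inr b => ord0_elim _ b end).
split; first exists (@lshift _ 0).
- by move=> i; rewrite -[RHS]splitK; case: (split i) => [a|[]].
- by move=> a; rewrite /= (unsplitK (inl _ a)).
split=> [i|i j] /=; rewrite /sum_lab; case: (split i) => [a|[]] //.
by case: (split j) => [b|[]].
Qed.

Lemma lpo_sum1l c P : lpo_iso (lpo_sum c (pom_one Sigma) P) P.
Proof.
exists (fun i => match split i with inl a => ord0_elim _ a | inr b => b end).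
split; first exists (@rshift 0 _).
- by move=> i; rewrite -[RHS]splitK; case: (split i) => [[]|b].
- by move=> b; rewrite /= (unsplitK (inr _ b)).
split=> [i|i j] /=; rewrite /sum_lab; case: (split i) => [[]|a] //.
by case: (split j) => [[]|b].
Qed.

Lemma pom_seq_iso P P' Q Q' : lpo_iso P P' -> lpo_iso Q Q' ->
  lpo_iso (pom_seq P Q) (pom_seq P' Q').
Proof. exact: lpo_sum_iso. Qed.

Lemma pom_par_iso P P' Q Q' : lpo_iso P P' -> lpo_iso Q Q' ->
  lpo_iso (pom_par P Q) (pom_par P' Q').
Proof. exact: lpo_sum_iso. Qed.

Lemma pom_seq_iso1r P Q : lpo_iso Q (pom_one Sigma) -> lpo_iso (pom_seq P Q) P.
Proof.
move=> I; exact: lpo_iso_trans (lpo_sum_iso true (lpo_iso_refl P) I) (lpo_sum1r true P).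
Qed.

Lemma pom_par_iso1r P Q : lpo_iso Q (pom_one Sigma) -> lpo_iso (pom_par P Q) P.
Proof.
move=> I; exact: lpo_iso_trans (lpo_sum_iso false (lpo_iso_refl P) I) (lpo_sum1r false P).
Qed.

Lemma pom_seq1l P : lpo_iso (pom_seq (pom_one Sigma) P) P.
Proof. exact: lpo_sum1l. Qed.

Lemma pom_seq1r P : lpo_iso (pom_seq P (pom_one Sigma)) P.
Proof. exact: lpo_sum1r. Qed.

Lemma pom_par1r P : lpo_iso (pom_par P (pom_one Sigma)) P.
Proof. exact: lpo_sum1r. Qed.

Lemma lpo_sumA c P Q W :
  lpo_iso (lpo_sum c (lpo_sum c P Q) W) (lpo_sum c P (lpo_sum c Q W)).
Proof.
pose f (i : 'I_(lsize P + lsize Q + lsize W)) : 'I_(lsize P + (lsize Q + lsize W)) :=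
  match split i with
  | inl a => match split a with inl x => lshift _ x | inr y => rshift _ (lshift _ y) end
  | inr z => rshift _ (rshift _ z) end.
pose g (j : 'I_(lsize P + (lsize Q + lsize W))) : 'I_(lsize P + lsize Q + lsize W) :=
  match split j with
  | inl x => lshift _ (lshift _ x)
  | inr b =>
      match split b with inl y => lshift _ (rshift _ y) | inr z => rshift _ z end end.
have splitl m n (x : 'I_m) : split (lshift n x) = inl x := unsplitK (inl _ x).
have splitr m n (x : 'I_n) : split (rshift m x) = inr x := unsplitK (inr _ x).
exists f; split; first exists g.
- move=> i; rewrite /f /g -[RHS]splitK; case: (split i) => [a|z]; rewrite ?splitr //.
  by rewrite -[a in RHS]splitK; case: (split a) => [x|y] /=; rewrite ?(splitl, splitr).
- move=> j; rewrite /f /g -[RHS]splitK; case: (split j) => [x|b]; rewrite ?splitl //.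
  by rewrite -[b in RHS]splitK; case: (split b) => [y|z] /=; rewrite ?(splitl, splitr).
split=> [i|i j] /=; rewrite /sum_lab /f.
  case: (split i) => [a|z] /=; rewrite /sum_lab ?(splitl, splitr) //.
  by case: (split a) => x /=; rewrite ?(splitl, splitr).
case: (split i) => [a|z]; case: (split j) => [b|z'] /=; rewrite ?(splitl, splitr) //=.
- by case: (split a) => x; case: (split b) => y /=; rewrite ?(splitl, splitr).
- by case: (split a) => x /=; rewrite ?(splitl, splitr).
- by case: (split b) => y /=; rewrite ?(splitl, splitr).
Qed.

Lemma pom_seqA P Q W :
  lpo_iso (pom_seq (pom_seq P Q) W) (pom_seq P (pom_seq Q W)).
Proof. exact: lpo_sumA. Qed.

End Isomorphisms.

Section Derivations.
Variables (Gamma Sigma : Type) (R : list (Gamma * gterm Gamma Sigma)).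
Notation term := (gterm Gamma Sigma).

Inductive derives : term -> lpo Sigma -> Prop :=
| derives_let a : derives (GLet _ a) (pom_atom a)
| derives_eps : derives GEps (pom_one Sigma)
| derives_seq t1 t2 P1 P2 :
    derives t1 P1 -> derives t2 P2 -> derives (GSeq t1 t2) (pom_seq P1 P2)
| derives_par t1 t2 P1 P2 :
    derives t1 P1 -> derives t2 P2 -> derives (GPar t1 t2) (pom_par P1 P2)
| derives_nt X t P : List.In (X, t) R -> derives t P -> derives (GNT _ X) P.

Lemma derives_gsem t : gground t -> derives t (gsem t).
Proof.
by elim: t => [x []|a _|_|t1 IH1 t2 IH2 [/IH1 ? /IH2 ?]|t1 IH1 t2 IH2 [/IH1 ? /IH2 ?]];
  constructor.
Qed.

Lemma gstep_derives t t' P : gstep R t t' -> derives t' P -> derives t P.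
Proof.
move=> s; elim: s P => {t t'} [X t rule P /(derives_nt rule) //|||| ] t1 t1' t2 _ IH P d;
  by inversion d; subst; constructor; auto.
Qed.

Lemma gderiv_derives t g : gderiv R t g -> gground g -> derives t (gsem g).
Proof.
elim=> [u|u1 u2 u3 s _ IH] hg; first exact: derives_gsem.
exact: gstep_derives s (IH hg).
Qed.

Lemma gderiv_trans t1 t2 t3 : gderiv R t1 t2 -> gderiv R t2 t3 -> gderiv R t1 t3.
Proof. by elim=> // u1 u2 u3 s _ IH /IH; apply: gd_step s. Qed.

Lemma gderiv_congr (f : term -> term) :
  (forall t t', gstep R t t' -> gstep R (f t) (f t')) ->
  forall t t', gderiv R t t' -> gderiv R (f t) (f t').
Proof.
move=> fstep t t'; elim=> [u|u1 u2 u3 s _ IH]; first exact: gd_refl.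
exact: gd_step (fstep _ _ s) IH.
Qed.

Lemma derives_gderiv t P :
  derives t P -> exists g, [/\ gderiv R t g, gground g & gsem g = P].
Proof.
elim=> {t P} [a||||X t P rule _ [g [d h <-]]].
- by exists (GLet _ a); split=> //; exact: gd_refl.
- by exists GEps; split=> //; exact: gd_refl.
- move=> t1 t2 _ _ _ [g1 [d1 h1 <-]] _ [g2 [d2 h2 <-]].
  exists (GSeq g1 g2); split=> //; apply: gderiv_trans.
    exact: gderiv_congr (fun _ _ => @gs_seql _ _ _ _ _ _) _ _ d1.
  exact: gderiv_congr (fun _ _ => @gs_seqr _ _ _ _ _ _) _ _ d2.
- move=> t1 t2 _ _ _ [g1 [d1 h1 <-]] _ [g2 [d2 h2 <-]].
  exists (GPar g1 g2); split=> //; apply: gderiv_trans.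
    exact: gderiv_congr (fun _ _ => @gs_parl _ _ _ _ _ _) _ _ d1.
  exact: gderiv_congr (fun _ _ => @gs_parr _ _ _ _ _ _) _ _ d2.
- by exists g; split=> //; apply: gd_step d; constructor.
Qed.

Definition term_lang (t : term) (P : lpo Sigma) : Prop :=
  exists2 P0, derives t P0 & lpo_iso P P0.

Lemma term_langE t P :
  term_lang t P <-> exists g, gderiv R t g /\ gground g /\ lpo_iso P (gsem g).
Proof.
split=> [[P0 d I]|[g [d [h I]]]]; last by exists (gsem g); first exact: gderiv_derives.
by have [g [dg hg e]] := derives_gderiv d; exists g; rewrite e.
Qed.

Lemma term_lang_iso t P P0 : term_lang t P0 -> lpo_iso P P0 -> term_lang t P.
Proof. by move=> [P1 d I] I'; exists P1 => //; exact: lpo_iso_trans I' I. Qed.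

Lemma term_lang_seq t1 t2 P1 P2 :
  term_lang t1 P1 -> term_lang t2 P2 -> term_lang (GSeq t1 t2) (pom_seq P1 P2).
Proof.
move=> [Q1 d1 I1] [Q2 d2 I2]; exists (pom_seq Q1 Q2); first exact: derives_seq.
exact: pom_seq_iso.
Qed.

Lemma term_lang_par t1 t2 P1 P2 :
  term_lang t1 P1 -> term_lang t2 P2 -> term_lang (GPar t1 t2) (pom_par P1 P2).
Proof.
move=> [Q1 d1 I1] [Q2 d2 I2]; exists (pom_par Q1 Q2); first exact: derives_par.
exact: pom_par_iso.
Qed.

Lemma term_lang_nt X t P : List.In (X, t) R -> term_lang t P -> term_lang (GNT _ X) P.
Proof. by move=> rule [P0 d I]; exists P0 => //; exact: derives_nt d. Qed.

End Derivations.

Lemma glangE Sigma (G : grammar Sigma) P :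
  glang G P <-> term_lang (g_rules G) (GNT _ (g_start G)) P.
Proof. exact: iff_sym (term_langE _ _ _). Qed.

Lemma pa_trace_iso Sigma Q (A : PA Sigma Q) q P P0 q' :
  pa_trace A q P0 q' -> lpo_iso P P0 -> pa_trace A q P q'.
Proof.
case=> {q P0 q'} [q P0 I|q a P0 I|q q'' q' U V P0 h1 h2 I|
                  q r r' s s' U V P0 h1 f1 h2 f2 I] I'.
- by apply: tr_one; exact: lpo_iso_trans I' I.
- by apply: tr_atom; exact: lpo_iso_trans I' I.
- by apply: tr_seq h1 h2 _; exact: lpo_iso_trans I' I.
- by apply: tr_par h1 f1 h2 f2 _; exact: lpo_iso_trans I' I.
Qed.

Section AutomatonToGrammar.
Variables (Sigma Q : finType) (A : PA Sigma Q) (q0 : Q).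

(* The start symbol is [None]; [Some (q, q')] generates the pomsets leading from
   [q] to [q']. *)
Notation nt := (option (Q * Q)).
Notation term := (gterm nt Sigma).

Inductive pa_rule : nt -> term -> Prop :=
| rule_start q' : pa_F A q' -> pa_rule None (GNT _ (Some (q0, q')))
| rule_one q : pa_rule (Some (q, q)) GEps
| rule_atom q a : pa_rule (Some (q, pa_delta A q a)) (GLet _ a)
| rule_seq q q'' q' :
    pa_rule (Some (q, q')) (GSeq (GNT _ (Some (q, q''))) (GNT _ (Some (q'', q'))))
| rule_par q r r' s s' : pa_F A r' -> pa_F A s' ->
    pa_rule (Some (q, pa_gamma A q r s))
            (GPar (GNT _ (Some (r, r'))) (GNT _ (Some (s, s')))).

Lemma pa_rule_finite :
  exists rules, forall X t, List.In (X, t) rules <-> pa_rule X t.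
Proof.
pose rule_of (i : Q + Q + Q * Sigma + Q * Q * Q + Q * Q * Q * Q * Q) : nt * term :=
  match i with
  | inl (inl (inl (inl q'))) => (None, GNT _ (Some (q0, q')))
  | inl (inl (inl (inr q))) => (Some (q, q), GEps)
  | inl (inl (inr (q, a))) => (Some (q, pa_delta A q a), GLet _ a)
  | inl (inr (q, q'', q')) =>
      (Some (q, q'), GSeq (GNT _ (Some (q, q''))) (GNT _ (Some (q'', q'))))
  | inr (q, r, r', s, s') =>
      (Some (q, pa_gamma A q r s), GPar (GNT _ (Some (r, r'))) (GNT _ (Some (s, s'))))
  end.
have [|rules rulesP] := @finite_cover _ _ rule_of (fun r => pa_rule r.1 r.2).
  case=> X t /=; case=> [q' _|q|q a|q q'' q'|q r r' s s' _ _].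
  - by exists (inl (inl (inl (inl q')))).
  - by exists (inl (inl (inl (inr q)))).
  - by exists (inl (inl (inr (q, a)))).
  - by exists (inl (inr (q, q'', q'))).
  - by exists (inr (q, r, r', s, s')).
by exists rules => X t; exact: rulesP (X, t).
Qed.

Variable rules : list (nt * term).
Hypothesis rulesP : forall X t, List.In (X, t) rules <-> pa_rule X t.

Fixpoint trace_sem (t : term) (P : lpo Sigma) : Prop :=
  match t with
  | GNT None => pa_lang A q0 P
  | GNT (Some (q, q')) => pa_trace A q P q'
  | GLet a => P = pom_atom a
  | GEps => P = pom_one Sigma
  | GSeq t1 t2 => exists P1 P2, [/\ P = pom_seq P1 P2, trace_sem t1 P1 & trace_sem t2 P2]
  | GPar t1 t2 => exists P1 P2, [/\ P = pom_par P1 P2, trace_sem t1 P1 & trace_sem t2 P2]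
  end.

Lemma derives_trace_sem t P : derives rules t P -> trace_sem t P.
Proof.
elim=> {t P} //= [t1 t2 P1 P2 _ h1 _ h2|t1 t2 P1 P2 _ h1 _ h2|]; try by exists P1, P2.
move=> X t P /rulesP r _; case: X t / r => /= [q' Fq'|q|q a|q q'' q'|q r r' s s' Fr' Fs'].
- by exists q'.
- by move->; exact: tr_one (lpo_iso_refl _).
- by move->; exact: tr_atom (lpo_iso_refl _).
- by move=> [P1 [P2 [-> h1 h2]]]; exact: tr_seq h1 h2 (lpo_iso_refl _).
- by move=> [P1 [P2 [-> h1 h2]]]; exact: tr_par h1 Fr' h2 Fs' (lpo_iso_refl _).
Qed.

Lemma term_lang_rule X t P :
  pa_rule X t -> term_lang rules t P -> term_lang rules (GNT _ X) P.
Proof. by move=> /rulesP; exact: term_lang_nt. Qed.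

Lemma pa_trace_term_lang q P q' :
  pa_trace A q P q' -> term_lang rules (GNT _ (Some (q, q'))) P.
Proof.
elim=> {q P q'} [q P I|q a P I|q q'' q' U V P _ IU _ IV I|
                 q r r' s s' U V P _ IU Fr' _ IV Fs' I].
- apply: term_lang_rule (rule_one q) _.
  by exists (pom_one Sigma) => //; exact: derives_eps.
- apply: term_lang_rule (rule_atom q a) _.
  by exists (pom_atom a) => //; exact: derives_let.
- apply: term_lang_rule (rule_seq q q'' q') _.
  exact: term_lang_iso (term_lang_seq IU IV) I.
- apply: term_lang_rule (rule_par q r s Fr' Fs') _.
  exact: term_lang_iso (term_lang_par IU IV) I.
Qed.

Lemma pa_lang_term_lang P : pa_lang A q0 P <-> term_lang rules (GNT _ None) P.
Proof.
split=> [[q' [Fq' tr]]|[P0 d I]].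
  exact: term_lang_rule (rule_start Fq') (pa_trace_term_lang tr).
have [q' [Fq' tr]] := derives_trace_sem d.
by exists q'; split=> //; exact: pa_trace_iso tr I.
Qed.

End AutomatonToGrammar.

Section GtermEq.
Variables (Gamma Sigma : eqType).

Fixpoint gterm_eqb (t u : gterm Gamma Sigma) : bool :=
  match t, u with
  | GNT x, GNT y => x == y
  | GLet a, GLet b => a == b
  | GEps, GEps => true
  | GSeq t1 t2, GSeq u1 u2 | GPar t1 t2, GPar u1 u2 => gterm_eqb t1 u1 && gterm_eqb t2 u2
  | _, _ => false
  end.

Lemma gterm_eqP : Equality.axiom gterm_eqb.
Proof.
elim=> [x|a||t1 IH1 t2 IH2|t1 IH1 t2 IH2] [y|b||u1 u2|u1 u2] /=; try by constructor.
- by apply: (iffP eqP) => [->|[]].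
- by apply: (iffP eqP) => [->|[]].
- by apply: (iffP andP) => [[/IH1-> /IH2->]|[<- <-]]; split; [apply/IH1|apply/IH2].
- by apply: (iffP andP) => [[/IH1-> /IH2->]|[<- <-]]; split; [apply/IH1|apply/IH2].
Qed.

End GtermEq.

HB.instance Definition _ (Gamma Sigma : eqType) :=
  hasDecEq.Build (gterm Gamma Sigma) (@gterm_eqP Gamma Sigma).

Section GrammarToAutomaton.
Variables (Sigma : finType) (G : grammar Sigma).
Notation nt := (g_NT G).
Notation term := (gterm nt Sigma).
Notation R := (g_rules G).

Fixpoint subterms (t : term) : seq term :=
  t :: match t with GSeq t1 t2 | GPar t1 t2 => subterms t1 ++ subterms t2 | _ => [::] end.

Lemma subterms_refl t : t \in subterms t.
Proof. by case: t => *; rewrite mem_head. Qed.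

Lemma subterms_trans t u v : u \in subterms t -> v \in subterms u -> v \in subterms t.
Proof.
elim: t => [x|a||t1 IH1 t2 IH2|t1 IH1 t2 IH2] /= + hv; rewrite inE;
  first [by move=> /eqP ut; rewrite ut in hv
        | case/predU1P=> [ut|]; first by rewrite ut in hv];
  by rewrite mem_cat => /orP [h|h]; rewrite inE mem_cat ?(IH1 h hv) ?(IH2 h hv) ?orbT.
Qed.

Definition gterms : seq term :=
  flatten [seq subterms u | u <- GNT _ (g_start G) :: [seq r.2 | r <- R]].

Lemma gterms_subterms t u : t \in gterms -> u \in subterms t -> u \in gterms.
Proof.
move=> /flatten_mapP [w hw ht] hu; apply/flatten_mapP; exists w => //.
exact: subterms_trans ht hu.
Qed.

Lemma gterms_seq t1 t2 : GSeq t1 t2 \in gterms -> t1 \in gterms /\ t2 \in gterms.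
Proof.
by move=> h; split; apply: gterms_subterms h _; rewrite in_cons mem_cat subterms_refl ?orbT.
Qed.

Lemma gterms_par t1 t2 : GPar t1 t2 \in gterms -> t1 \in gterms /\ t2 \in gterms.
Proof.
by move=> h; split; apply: gterms_subterms h _; rewrite in_cons mem_cat subterms_refl ?orbT.
Qed.

Lemma gterms_start : GNT _ (g_start G) \in gterms.
Proof.
by apply/flatten_mapP; exists (GNT _ (g_start G)); rewrite ?mem_head ?subterms_refl.
Qed.

Lemma gterms_rule X t : List.In (X, t) R -> t \in gterms.
Proof.
move=> /InP rule; apply/flatten_mapP; exists t; last exact: subterms_refl.
by rewrite in_cons (map_f snd rule) orbT.
Qed.

(* [None] is the sink [bot], [Some None] the accepting sink [top], and [Some (Some i)]
   stands for the [i]-th term of [gterms]; [state_of] sends terms outside [gterms]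
   to [bot]. *)
Definition state := option (option 'I_(size gterms)).
Notation top := (Some None : state).

Definition term_of (i : 'I_(size gterms)) : term := nth GEps gterms i.

Definition state_of (t : term) : state :=
  if insub (index t gterms) is Some i then Some (Some i) else None.

Lemma state_ofP t : t \in gterms -> exists2 i, state_of t = Some (Some i) & term_of i = t.
Proof.
move=> ht; rewrite /state_of insubT ?index_mem // => lt.
by exists (Ordinal lt); rewrite // /term_of nth_index.
Qed.

Lemma term_of_state t i : state_of t = Some (Some i) -> term_of i = t.
Proof.
rewrite /state_of; case: insubP => [j lt jE [<-]|//].
by rewrite /term_of jE nth_index // -index_mem.
Qed.

Lemma state_of_neq_top t : state_of t <> top.
Proof. by rewrite /state_of; case: insub. Qed.

Definition gdelta (q : state) (a : Sigma) : state :=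
  if q is Some (Some i) then
    if term_of i is GLet b then if b == a then top else None else None
  else None.

Definition ggamma (q r s : state) : state :=
  if q is Some (Some i) then
    match term_of i with
    | GNT X => if (s == top) && has (fun rt => (rt.1 == X) && (r == state_of rt.2)) R
               then top else None
    | GSeq t1 t2 => if (r == state_of t1) && (s == top) then state_of t2 else None
    | GPar t1 t2 => if (r == state_of t1) && (s == state_of t2) then top else None
    | _ => None
    end
  else None.

Definition gfinal (q : state) : Prop :=
  q = top \/ exists2 i, q = Some (Some i) & term_of i = GEps.

Lemma gfinal_bot : ~ gfinal None.
Proof. by case=> // [[]]. Qed.

Lemma gfinal_top : gfinal top.
Proof. by left. Qed.

Definition gpa : PA Sigma state :=
  @MkPA Sigma state gdelta ggamma gfinal None top gfinal_bot gfinal_top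
    (fun _ => erefl) (fun _ => erefl) (fun _ _ => erefl) (fun _ _ => erefl).

Definition state_lang (q : state) (P : lpo Sigma) : Prop :=
  match q with
  | None => False
  | Some None => lpo_iso P (pom_one Sigma)
  | Some (Some i) => term_lang R (term_of i) P
  end.

Lemma state_lang_iso q P P0 : state_lang q P0 -> lpo_iso P P0 -> state_lang q P.
Proof.
by case: q => [[i|]|] //= h I; [exact: term_lang_iso h I|exact: lpo_iso_trans I h].
Qed.

Lemma state_lang_state_of t P : state_lang (state_of t) P -> term_lang R t P.
Proof.
case E: (state_of t) => [[i|]|] //=; last by have := @state_of_neq_top t; rewrite E.
by rewrite (term_of_state E).
Qed.

Lemma state_lang_final q : gfinal q -> state_lang q (pom_one Sigma).
Proof.
case=> [->|[i -> /= ->]]; first exact: lpo_iso_refl.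
by exists (pom_one Sigma); [exact: derives_eps|exact: lpo_iso_refl].
Qed.

Lemma state_lang_delta q a P :
  state_lang (gdelta q a) P -> state_lang q (pom_seq (pom_atom a) P).
Proof.
case: q => [[i|]|] //=; rewrite /gdelta; case: (term_of i) => // b.
case: eqP => // <- /= hP; exists (pom_atom b); first exact: derives_let.
exact: pom_seq_iso1r.
Qed.

Lemma state_lang_gamma q r s U V P :
  state_lang r U -> state_lang s V -> state_lang (ggamma q r s) P ->
  state_lang q (pom_seq (pom_par U V) P).
Proof.
move=> hU hV; case: q => [[i|]|] //=; rewrite /ggamma.
case: (term_of i) => // [X|t1 t2|t1 t2].
- case: ifP => // /andP [/eqP es /hasP [[Y t] /InP rule /andP [/eqP /= eY /eqP er]]] hP.
  subst s r Y; apply: term_lang_iso (term_lang_nt rule (state_lang_state_of hU)) _.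
  exact: lpo_iso_trans (pom_seq_iso1r _ hP) (pom_par_iso1r _ hV).
- case: ifP => // /andP [/eqP er /eqP es] /state_lang_state_of hP; subst r s.
  apply: term_lang_iso (term_lang_seq (state_lang_state_of hU) hP) _.
  exact: pom_seq_iso (pom_par_iso1r _ hV) (lpo_iso_refl _).
- case: ifP => // /andP [/eqP er /eqP es] /= hP; subst r s.
  move: hU hV => /state_lang_state_of hU /state_lang_state_of hV.
  exact: term_lang_iso (term_lang_par hU hV) (pom_seq_iso1r _ hP).
Qed.

Lemma pa_trace_state_lang q P q' : pa_trace gpa q P q' ->
  forall P', state_lang q' P' -> state_lang q (pom_seq P P').
Proof.
elim=> {q P q'} [q P I|q a P I|q q'' q' U V P _ IH1 _ IH2 I|
                 q r r' s s' U V P _ IHU Fr' _ IHV Fs' I] P' h.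
- exact: state_lang_iso h (lpo_iso_trans (pom_seq_iso I (lpo_iso_refl _)) (pom_seq1l _)).
- exact: state_lang_iso (state_lang_delta h) (pom_seq_iso I (lpo_iso_refl _)).
- apply: state_lang_iso (IH1 _ (IH2 _ h)) _.
  exact: lpo_iso_trans (pom_seq_iso I (lpo_iso_refl _)) (pom_seqA _ _ _).
- have hU := state_lang_iso (IHU _ (state_lang_final Fr')) (lpo_iso_sym (pom_seq1r U)).
  have hV := state_lang_iso (IHV _ (state_lang_final Fs')) (lpo_iso_sym (pom_seq1r V)).
  exact: state_lang_iso (state_lang_gamma hU hV h) (pom_seq_iso I (lpo_iso_refl _)).
Qed.

Lemma gpa_sound t P : pa_lang gpa (state_of t) P -> term_lang R t P.
Proof.
move=> [q' [Fq' tr]]; apply: state_lang_state_of.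
apply: state_lang_iso (pa_trace_state_lang tr (state_lang_final Fq')) _.
exact: lpo_iso_sym (pom_seq1r _).
Qed.

Lemma gpa_complete t P : derives R t P -> t \in gterms -> pa_lang gpa (state_of t) P.
Proof.
elim=> {t P} [a||t1 t2 P1 P2 _ IH1 _ IH2|t1 t2 P1 P2 _ IH1 _ IH2|X t P rule _ IH] ht;
  have [i si ti] := state_ofP ht.
- exists top; split; first exact: gfinal_top.
  have := tr_atom gpa (state_of (GLet _ a)) (lpo_iso_refl (pom_atom a)).
  by rewrite /= si /gdelta ti eqxx.
- by exists (state_of GEps); split; [right; exists i|exact: tr_one (lpo_iso_refl _)].
- have [/IH1 [r' [Fr' tr1]] /IH2 [q' [Fq' tr2]]] := gterms_seq ht.
  exists q'; split=> //.
  have := tr_par (state_of (GSeq t1 t2)) tr1 Fr' (tr_one gpa top (lpo_iso_refl _))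
    gfinal_top (lpo_iso_refl (pom_par P1 (pom_one Sigma))).
  rewrite /= si /ggamma ti !eqxx /= => fork; apply: tr_seq fork tr2 _.
  exact: pom_seq_iso (lpo_iso_sym (pom_par1r _)) (lpo_iso_refl _).
- have [/IH1 [r' [Fr' tr1]] /IH2 [s' [Fs' tr2]]] := gterms_par ht.
  exists top; split; first exact: gfinal_top.
  have := tr_par (state_of (GPar t1 t2)) tr1 Fr' tr2 Fs' (lpo_iso_refl _).
  by rewrite /= si /ggamma ti !eqxx.
- have [r' [Fr' tr]] := IH (gterms_rule rule).
  exists top; split; first exact: gfinal_top.
  have := tr_par (state_of (GNT _ X)) tr Fr' (tr_one gpa top (lpo_iso_refl _)) gfinal_top
    (lpo_iso_sym (pom_par1r P)).
  have ruleX : has (fun rt => (rt.1 == X) && (state_of t == state_of rt.2)) R.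
    by apply/hasP; exists (X, t); [exact/InP|rewrite /= !eqxx].
  by rewrite /= si /ggamma ti eqxx ruleX.
Qed.

Lemma gpa_correct P : pa_lang gpa (state_of (GNT _ (g_start G))) P <-> glang G P.
Proof.
rewrite glangE; split; first exact: gpa_sound.
move=> [P0 d I]; have [q' [Fq' tr]] := gpa_complete d gterms_start.
by exists q'; split=> //; exact: pa_trace_iso tr I.
Qed.

End GrammarToAutomaton.

Theorem mainTheorem3 (Sigma : finType) (U : lpo Sigma -> Prop)
  (U_iso : forall P Q, lpo_iso P Q -> U P -> U Q)
  (U_sp : forall P, U P -> is_sp P) :
  (exists (Q : finType) (A : PA Sigma Q) (q : Q),
      forall P, U P <-> pa_lang A q P)
  <->
  (exists G : grammar Sigma, forall P, U P <-> glang G P).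
Proof.
split=> [[Q [A [q UA]]]|[G UG]].
- have [rules rulesP] := pa_rule_finite A q.
  exists (@MkGrammar Sigma (option (Q * Q)) None rules) => P.
  by rewrite UA glangE; exact: pa_lang_term_lang rulesP P.
- exists (state G), (gpa G), (state_of (GNT _ (g_start G))) => P.
  by rewrite UG gpa_correct.
Qed.
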